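(* Let $X$ be a set of pointed Kripke models, $\Lambda$ a normal modal logic sound with respect to $X$, and $D\subseteq\boldsymbol{\mathcal{L}}_{\Lambda}$ a $\Lambda$-representative descriptor for $X$. Then $X_D=X_{\boldsymbol{\mathcal{L}}_{\Lambda}}$; i.e., for all $x,y\in X$, $y\in\boldsymbol{x}_D$ iff $y\in\boldsymbol{x}_{\boldsymbol{\mathcal{L}}_{\Lambda}}$.
   Context: Signature: countable non-empty sets $\Phi$ (atoms) and $\mathcal{I}$ (indices); modal language $\mathcal{L}$: $\varphi ::= \top\mid p\mid\neg\varphi\mid\varphi\wedge\varphi\mid\Box_i\varphi$, interpreted on pointed Kripke models (countable non-empty state sets, relations $R_i$, atom valuations) with standard semantics. For $\varphi\in\mathcal{L}$, $\boldsymbol{\varphi}$ is the set of formulas $\Lambda$-provably equivalent to $\varphi$ and $\boldsymbol{\mathcal{L}}_{\Lambda}=\{\boldsymbol{\varphi}:\varphi\in\mathcal{L}\}$ (by soundness, $x\models\boldsymbol{\varphi}$ is well defined for $x\in X$). A descriptor for $X$ is any $D\subseteq\boldsymbol{\mathcal{L}}_{\Lambda}$; $\boldsymbol{x}_D=\{y\in X:\forall\boldsymbol{\varphi}\in D,\ y\models\varphi\iff x\models\varphi\}$ and $X_D=\{\boldsymbol{x}_D:x\in X\}$. $D$ is $\Lambda$-representative if for every $\varphi\in\mathcal{L}$ there is $\{\boldsymbol{\psi}_i\}_{i\in I}\subseteq D$ such that for every $J\subseteq I$ the set $\{\psi_i\}_{i\in J}\cup\{\neg\psi_i\}_{i\in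 I\setminus J}$ $\Lambda$-entails $\varphi$ or $\neg\varphi$. *)

From Stdlib Require Import List.
Import ListNotations.

Set Implicit Arguments.

Definition countable (T : Type) : Prop :=
  exists f : T -> nat, forall a b, f a = f b -> a = b.

Section Modal.
Variables (Phi Ix : Type).

Inductive form : Type :=
| FTop : form
| FVar : Phi -> form
| FNeg : form -> form
| FAnd : form -> form -> form
| FBox : Ix -> form -> form.

Definition FImp (a b : form) : form := FNeg (FAnd a (FNeg b)).

Record kmodel : Type := KModel {
  kstate : Type;
  kstate_countable : countable kstate;
  kstate_nonempty : inhabited kstate;
  krel : Ix -> kstate -> kstate -> Prop;
  kval : Phi -> kstate -> Prop }.

Record pointed : Type := Pointed { pmodel : kmodel; pstate : kstate pmodel }.

Fixpoint msat (M : kmodel) (w : kstate M) (f : form) : Prop :=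
  match f with
  | FTop => True
  | FVar p => kval M p w
  | FNeg g => ~ msat M w g
  | FAnd g h => msat M w g /\ msat M w h
  | FBox i g => forall v, krel M i w v -> msat M v g
  end.

Definition sat (x : pointed) (f : form) : Prop := msat (pmodel x) (pstate x) f.

Fixpoint peval (v : form -> bool) (f : form) : bool :=
  match f with
  | FTop => true
  | FVar p => v (FVar p)
  | FNeg g => negb (peval v g)
  | FAnd g h => andb (peval v g) (peval v h)
  | FBox i g => v (FBox i g)
  end.

Definition tautology (f : form) : Prop := forall v, peval v f = true.

Fixpoint subst (s : Phi -> form) (f : form) : form :=
  match f with
  | FTop => FTop
  | FVar p => s p
  | FNeg g => FNeg (subst s g)
  | FAnd g h => FAnd (subst s g) (subst s h)
  | FBox i g => FBox i (subst s g)
  end.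

Definition normal_logic (L : form -> Prop) : Prop :=
  (forall f, tautology f -> L f) /\
  (forall i a b, L (FImp (FBox i (FImp a b)) (FImp (FBox i a) (FBox i b)))) /\
  (forall a b, L (FImp a b) -> L a -> L b) /\
  (forall i a, L a -> L (FBox i a)) /\
  (forall s a, L a -> L (subst s a)).

Definition sound (L : form -> Prop) (X : pointed -> Prop) : Prop :=
  forall f, L f -> forall x, X x -> sat x f.

Fixpoint conj_list (l : list form) : form :=
  match l with
  | [] => FTop
  | a :: l' => FAnd a (conj_list l')
  end.

Definition entails (L : form -> Prop) (G : form -> Prop) (f : form) : Prop :=
  exists l : list form, (forall a, In a l -> G a) /\ L (FImp (conj_list l) f).

Definition prov_equiv (L : form -> Prop) (a b : form) : Prop :=
  L (FImp a b) /\ L (FImp b a).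

(* A descriptor D, a set of Lambda-equivalence classes, is represented by a set of
   formulas: the class of phi lies in D iff some formula of D is
   Lambda-equivalent to phi. *)
Definition in_desc (L : form -> Prop) (D : form -> Prop) (f : form) : Prop :=
  exists g, D g /\ prov_equiv L f g.

Definition in_class (L : form -> Prop) (D : form -> Prop) (x y : pointed) : Prop :=
  forall f, in_desc L D f -> (sat y f <-> sat x f).

Definition full_desc : form -> Prop := fun _ => True.

Definition representative (L : form -> Prop) (D : form -> Prop) : Prop :=
  forall f : form,
    exists (I : Type) (psi : I -> form),
      (forall i, in_desc L D (psi i)) /\
      forall J : I -> Prop,
        let G := fun g => exists i, (J i /\ g = psi i) \/ (~ J i /\ g = FNeg (psi i)) in
        entails L G f \/ entails L G (FNeg f).

End Modal.

From Stdlib Require Import List Classical.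

Set Implicit Arguments.
Unset Strict Implicit.

(* By representativeness, the truth values of the D-formulas psi_i at a state
   determine, via Lambda-entailment, the truth value of any phi there.  If x and
   y agree on D they realise the same truth pattern on the psi_i, and soundness
   transfers the entailed verdict on phi to both of them. *)

Section Descriptors.

Variables Phi Ix : Type.

Implicit Types (z x y : pointed Phi Ix) (a b f g : form Phi Ix)
  (L G D : form Phi Ix -> Prop) (X : pointed Phi Ix -> Prop).

Lemma sat_FNeg z f : sat z (FNeg f) <-> ~ sat z f.
Proof. reflexivity. Qed.

Lemma sat_FImp z a b : sat z (FImp a b) -> sat z a -> sat z b.
Proof.
  unfold sat, FImp; simpl; intros Hab Ha.
  apply NNPP; intros Hb; apply Hab; split; assumption.
Qed.

Lemma sat_conj_list z (l : list (form Phi Ix)) :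
  (forall a, In a l -> sat z a) -> sat z (conj_list l).
Proof.
  induction l as [|a l IH]; simpl; intros Hl.
  - exact I.
  - split.
    + apply Hl; left; reflexivity.
    + apply IH; intros b Hb; apply Hl; right; exact Hb.
Qed.

Lemma sound_entails L X G f z :
  sound L X -> X z -> (forall g, G g -> sat z g) -> entails L G f -> sat z f.
Proof.
  intros HS Hz HG [l [Hl Hf]].
  apply (sat_FImp (HS _ Hf z Hz)), sat_conj_list.
  intros a Ha; apply HG, Hl, Ha.
Qed.

Lemma normal_logic_FImp_refl L f : normal_logic L -> L (FImp f f).
Proof.
  intros [Htaut _]; apply Htaut; intros v; simpl.
  destruct (peval v f); reflexivity.
Qed.

Lemma in_desc_full_desc L f : normal_logic L -> in_desc L (@full_desc Phi Ix) f.
Proof.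
  intros HN; exists f; split; [exact I|].
  split; apply normal_logic_FImp_refl; exact HN.
Qed.

Lemma in_class_full_desc L D x y :
  normal_logic L -> in_class L (@full_desc Phi Ix) x y -> in_class L D x y.
Proof. intros HN Hxy f _; apply Hxy, in_desc_full_desc, HN. Qed.

Definition literals (I : Type) (psi : I -> form Phi Ix) (J : I -> Prop) g : Prop :=
  exists i, (J i /\ g = psi i) \/ (~ J i /\ g = FNeg (psi i)).

Lemma sat_literals (I : Type) (psi : I -> form Phi Ix) (J : I -> Prop) z :
  (forall i, sat z (psi i) <-> J i) -> forall g, literals psi J g -> sat z g.
Proof.
  intros Hz g [i [[Hi ->] | [Hi ->]]].
  - apply Hz, Hi.
  - rewrite sat_FNeg, Hz; exact Hi.
Qed.

Lemma entails_literals_agree L X G f x y :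
  sound L X -> X x -> X y ->
  (forall g, G g -> sat x g) -> (forall g, G g -> sat y g) ->
  entails L G f \/ entails L G (FNeg f) -> (sat y f <-> sat x f).
Proof.
  intros HS Hx Hy HGx HGy [Hf | Hnf].
  - pose proof (sound_entails HS Hx HGx Hf).
    pose proof (sound_entails HS Hy HGy Hf).
    tauto.
  - pose proof (sound_entails HS Hx HGx Hnf).
    pose proof (sound_entails HS Hy HGy Hnf).
    rewrite sat_FNeg in *; tauto.
Qed.

Lemma representative_in_class L X D x y :
  sound L X -> representative L D -> X x -> X y ->
  in_class L D x y -> forall f, sat y f <-> sat x f.
Proof.
  intros HS HR Hx Hy Hxy f.
  destruct (HR f) as [I [psi [HD Hdecide]]].
  set (J := fun i => sat x (psi i)).
  apply (entails_literals_agree (G := literals psi J) HS Hx Hy).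
  - apply sat_literals; intros i; reflexivity.
  - apply sat_literals; intros i; apply Hxy, HD.
  - exact (Hdecide J).
Qed.

End Descriptors.

Theorem lemma9 (Phi Ix : Type)
  (hPhi : countable Phi) (nPhi : inhabited Phi)
  (hIx : countable Ix) (nIx : inhabited Ix)
  (X : pointed Phi Ix -> Prop) (L : form Phi Ix -> Prop) (D : form Phi Ix -> Prop) :
  normal_logic L -> sound L X -> representative L D ->
  forall x y, X x -> X y ->
    (in_class L D x y <-> in_class L (@full_desc Phi Ix) x y).
Proof.
  intros HN HS HR x y Hx Hy; split.
  - intros Hxy f _; exact (representative_in_class HS HR Hx Hy Hxy f).
  - apply in_class_full_desc, HN.
Qed.
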